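(* Let $\mathbf x,\mathbf y\in(\Sigma^* )^\circ$ and let $\mathbf s=-g(\mathbf x)$, $\mathbf t=-g(\mathbf y)$. If $\|\mathbf x-\mathbf y\|_{\mathbf x}<\tfrac12$, then $\mathbf x$ certifies $\mathbf t$, i.e. $H(\mathbf x)^{-1}\mathbf t\in\Sigma^*$.
   Context: Fix nonzero real polynomials $g_1,\dots,g_m$ in $n$ variables and nonnegative integers $d_1,\dots,d_m$. Let $\mathcal V$ be the real vector space of polynomials $\sum_{i=1}^m g_i r_i$ with $\deg r_i\le 2d_i$, and $\Sigma\subseteq\mathcal V$ the cone of weighted sums of squares $\sum_i g_i\sigma_i$ with each $\sigma_i$ a sum of squares of polynomials of degree at most $d_i$; assume $\Sigma$ is a proper cone. Fix a basis $\mathbf q=(q_1,\dots,q_U)$ of $\mathcal V$, identify $\mathcal V$ and its dual with $\mathbb R^U$ with the standard inner product and Euclidean norm $\|\cdot\|$; $\Sigma^*$ is the dual cone, $K^\circ$ the interior of $K$. For each $i$ fix a basis $\mathbf p_i$ (of size $L_i$) of polynomials of degree at most $d_i$ and let $\Lambda_i:\mathbb R^U\to\mathbb S^{L_i}$ be the unique linear map with $\sum_u q_u\Lambda_i(\mathbf e_u)=g_i\mathbf p_i\mathbf p_i^T$; $\Lambda=\Lambda_1\oplus\cdots\oplus\Lambda_m$ (block diagonal), $\Lambda^*$ its adjoint. Then $(\Sigma^* )^\circ=\{\mathbf x:\Lambda(\mathbf x)\succ0\}$ and $\Sigma^*=\{\mathbf x:\Lambda(\mathbf x)\succeq0\}$.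 On $(\Sigma^* )^\circ$ let $f(\mathbf x)=-\ln\det\Lambda(\mathbf x)$, with gradient $g(\mathbf x)=-\Lambda^*(\Lambda(\mathbf x)^{-1})$ (not to be confused with the weights $g_i$) and Hessian $H(\mathbf x)\mathbf w=\Lambda^*(\Lambda(\mathbf x)^{-1}\Lambda(\mathbf w)\Lambda(\mathbf x)^{-1})$, positive definite. The local norm is $\|\mathbf v\|_{\mathbf x}=\|H(\mathbf x)^{1/2}\mathbf v\|$. *)

From mathcomp Require Import all_boot all_algebra.
From mathcomp Require Import all_classical all_reals all_analysis.
From mathcomp Require mpoly.
Import (canonicals, coercions) mpoly.

Set Implicit Arguments.
Unset Strict Implicit.
Unset Printing Implicit Defensive.
Import GRing.Theory Num.Theory.
Import numFieldNormedType.Exports.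
Local Open Scope ring_scope.
Local Open Scope classical_set_scope.

Notation mpol R n := (mpoly.mpoly n R).

Section WSOS.
Variables (R : realType) (n m : nat).
Local Notation mpol := (mpoly.mpoly n R).

(* deg p <= k  (msize p = 1 + total degree, 0 for the zero polynomial) *)
Definition deg_le (p : mpol) (k : nat) : Prop := (mpoly.msize p <= k.+1)%N.

Definition combo (U : nat) (q : 'I_U -> mpol) (c : 'cV[R]_U) : mpol :=
  \sum_(u < U) c u 0 *: q u.

Definition is_sos (k : nat) (sigma : mpol) : Prop :=
  exists (N : nat) (h : 'I_N -> mpol),
    (forall j, deg_le (h j) k) /\ sigma = \sum_(j < N) h j ^+ 2.

Variables (g : 'I_m -> mpol) (d : 'I_m -> nat).

Definition inV (f : mpol) : Prop :=
  exists r : 'I_m -> mpol,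
    (forall i, deg_le (r i) (2 * d i)%N) /\ f = \sum_(i < m) g i * r i.

Definition is_basis_V (U : nat) (q : 'I_U -> mpol) : Prop :=
  [/\ forall u, inV (q u),
      forall c, combo q c = 0 -> c = 0 &
      forall f, inV f -> exists c, f = combo q c].

Definition Sigma_coord (U : nat) (q : 'I_U -> mpol) : set 'cV[R]_U :=
  [set c | exists sigma : 'I_m -> mpol,
      (forall i, is_sos (d i) (sigma i)) /\
      \sum_(i < m) g i * sigma i = combo q c].

End WSOS.

Definition is_basis_deg (R : realType) (n : nat) (k : nat) (L : nat)
    (p : 'I_L -> mpol R n) : Prop :=
  [/\ forall j, deg_le (p j) k,
      forall c, combo p c = 0 -> c = 0 &
      forall f : mpol R n, deg_le f k -> exists c, f = combo p c].

Definition dual_cone (R : realType) (U : nat) (S : set 'cV[R]_U) : set 'cV[R]_U :=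
  [set x | forall c, S c -> 0 <= (c^T *m x) 0 0].

(* proper cone: closed, pointed, with nonempty interior (convexity of a
   cone of weighted SOS is automatic) *)
Definition proper_cone (R : realType) (U : nat) (S : set 'cV[R]_U) : Prop :=
  [/\ closed S, (forall c, S c -> S (- c) -> c = 0) & interior S !=set0].

Section Barrier.
Variables (R : realType) (m U : nat) (L : 'I_m -> nat).
(* A i u = Lambda_i(e_u) *)
Variable A : forall i : 'I_m, 'I_U -> 'M[R]_(L i).

Definition Lambda_i (i : 'I_m) (x : 'cV[R]_U) : 'M[R]_(L i) :=
  \sum_(u < U) x u 0 *: A i u.

Definition Lambda (x : 'cV[R]_U) : 'M[R]_(\sum_(i < m) L i) :=
  mxdiag (fun i => Lambda_i i x).

Definition Lambda_adj (M : 'M[R]_(\sum_(i < m) L i)) : 'cV[R]_U :=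
  \col_(u < U) \tr ((Lambda (delta_mx u 0))^T *m M).

Definition grad (x : 'cV[R]_U) : 'cV[R]_U :=
  - Lambda_adj (invmx (Lambda x)).

Definition Hess (x : 'cV[R]_U) : 'M[R]_U :=
  \matrix_(u < U, v < U)
     (Lambda_adj (invmx (Lambda x) *m Lambda (delta_mx v 0) *m invmx (Lambda x))) u 0.

Definition local_norm (x v : 'cV[R]_U) : R :=
  Num.sqrt ((v^T *m Hess x *m v) 0 0).

End Barrier.

(* Write X = Lambda x, Y = Lambda y, K = X^-1, J = Y^-1 and
   <E, F> = tr (E K F K), so that <Lambda a, Lambda b> = a^T H(x) b.  A point x
   of the interior of Sigma^* has Lambda x > 0, since x pairs positively with
   the weighted squares g_i (p_i^T a)^2, and Lambda is injective because Sigma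
   has interior points; hence H(x) > 0.

   Let z = H(x)^-1 t, Z = Lambda z, E = Z - X and M = X J X, which represents
   G |-> tr (G J).  Testing H(x) z = t against z - x gives <E, M - Z> = 0, so
   |E| <= |M - X| by Pythagoras, and |M - X|^2 = tr (J D J D) with D = X - Y.
   Cauchy-Schwarz against X v v^T X gives |v^T G v| <= |G| v^T X v for every
   symmetric G.  As |D| = |x - y|_x < 1/2, this yields X < 2 Y, hence J < 2 K
   and tr (J D J D) <= 4 |D|^2 < 1.  Thus |E| < 1 and Z = X + E > 0.  Finally
   Lambda z >= 0 puts z in Sigma^*: a weighted sum of squares pairs with z as a
   sum of terms a^T Lambda_i(z) a. *)

From HB Require Import structures.
From mathcomp Require Import all_boot all_order all_algebra.
From mathcomp Require Import all_classical all_reals all_analysis.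
From mathcomp Require mpoly.
From mathcomp Require Import ring lra.
Import (canonicals, coercions) mpoly.
Import Order.TTheory GRing.Theory Num.Theory.
Import numFieldNormedType.Exports.
Local Open Scope ring_scope.

Set Implicit Arguments.
Unset Strict Implicit.
Unset Printing Implicit Defensive.

Section PosDefMx.
Variable R : rcfType.

Definition mxform n (S : 'M[R]_n) (u v : 'cV[R]_n) : R := (u^T *m S *m v) 0 0.
Definition qform n (S : 'M[R]_n) (v : 'cV[R]_n) : R := mxform S v v.
Definition posdefmx n (S : 'M[R]_n) : Prop :=
  S^T = S /\ forall v, v != 0 -> 0 < qform S v.

Lemma mxform_is_linear n (S : 'M[R]_n) u : linear_for *%R (mxform S u).
Proof. by move=> k v w; rewrite /mxform mulmxDr -scalemxAr !mxE. Qed.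

HB.instance Definition _ n (S : 'M[R]_n) u :=
  GRing.isLinear.Build R 'cV[R]_n R *%R (mxform S u) (mxform_is_linear S u).

Lemma mxformC n (S : 'M[R]_n) u v : S^T = S -> mxform S u v = mxform S v u.
Proof.
move=> sS; rewrite /mxform [u^T *m S *m v]mx11_scalar -tr_scalar_mx -mx11_scalar.
by rewrite !trmx_mul trmxK sS mulmxA.
Qed.

Lemma mxformE n (S : 'M[R]_n) u v :
  mxform S u v = \sum_i \sum_j u i 0 * S i j * v j 0.
Proof.
rewrite /mxform mxE; under eq_bigr do rewrite mxE mulr_suml.
by rewrite exchange_big; apply: eq_bigr => i _; apply: eq_bigr => j _; rewrite mxE.
Qed.

Lemma qformDl n (S T : 'M[R]_n) v : qform (S + T) v = qform S v + qform T v.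
Proof. by rewrite /qform /mxform mulmxDr mulmxDl mxE. Qed.

Lemma qformNl n (S : 'M[R]_n) v : qform (- S) v = - qform S v.
Proof. by rewrite /qform /mxform mulmxN mulNmx mxE. Qed.

Lemma qformZl n (S : 'M[R]_n) k v : qform (k *: S) v = k * qform S v.
Proof. by rewrite /qform /mxform -scalemxAr -scalemxAl mxE. Qed.

Lemma qformDr n (S : 'M[R]_n) u v : S^T = S ->
  qform S (u + v) = qform S u + 2 * mxform S u v + qform S v.
Proof.
move=> sS; rewrite /qform linearD /= ![mxform S (u + v) _]mxformC // !linearD /=.
by rewrite (mxformC v u sS); ring.
Qed.

Lemma qformZr n (S : 'M[R]_n) k v : qform S (k *: v) = k ^+ 2 * qform S v.
Proof. by rewrite /qform /mxform !linearZ /= -!scalemxAl !mxE mulrA -expr2. Qed.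

Lemma qform0l n (v : 'cV[R]_n) : qform 0 v = 0.
Proof. by rewrite /qform /mxform mulmx0 mul0mx mxE. Qed.

Lemma qform0r n (S : 'M[R]_n) : qform S 0 = 0.
Proof. by rewrite /qform /mxform mulmx0 mxE. Qed.

Lemma qform_ge0 n (S : 'M[R]_n) v : posdefmx S -> 0 <= qform S v.
Proof. by case=> _ pS; have [->|/pS/ltW//] := eqVneq v 0; rewrite qform0r. Qed.

Lemma posdefmx_unit n (S : 'M[R]_n) : posdefmx S -> S \in unitmx.
Proof.
case=> _ pS; rewrite unitmxE unitfE; apply/negP => /det0P [v v_neq0 vS].
have /pS : v^T != 0 by rewrite trmx_eq0.
by rewrite /qform /mxform trmxK vS mul0mx mxE ltxx.
Qed.

Lemma qform_invmx n (S : 'M[R]_n) v : posdefmx S ->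
  qform (invmx S) v = qform S (invmx S *m v).
Proof.
move=> hS; have [sS _] := hS.
rewrite /qform /mxform trmx_mul trmx_inv sS -!mulmxA (mulmxA S).
by rewrite mulmxV ?posdefmx_unit // mul1mx.
Qed.

Lemma posdefmx_inv n (S : 'M[R]_n) : posdefmx S -> posdefmx (invmx S).
Proof.
move=> hS; have uS := posdefmx_unit hS.
split=> [|v v_neq0]; first by rewrite trmx_inv hS.1.
rewrite qform_invmx //; apply: hS.2.
by apply: contra v_neq0 => /eqP h; rewrite -[v](mulKVmx uS) h mulmx0.
Qed.

Lemma posdefmxZ n k (S : 'M[R]_n) : 0 < k -> posdefmx S -> posdefmx (k *: S).
Proof.
move=> k_gt0 [sS pS]; split=> [|v /pS]; first by rewrite linearZ /= sS.
by rewrite qformZl; apply: mulr_gt0.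
Qed.

Lemma mxtrace_gramE m n (G : 'M[R]_(m, n)) :
  \tr (G^T *m G) = \sum_j \sum_i G i j ^+ 2.
Proof.
by apply: eq_bigr => j _; rewrite mxE; apply: eq_bigr => i _; rewrite mxE expr2.
Qed.

Lemma mxtrace_gram_ge0 m n (G : 'M[R]_(m, n)) : 0 <= \tr (G^T *m G).
Proof. by rewrite mxtrace_gramE; do 2!apply: sumr_ge0 => ? _; apply: sqr_ge0. Qed.

Lemma mxtrace_gram_eq0 m n (G : 'M[R]_(m, n)) : \tr (G^T *m G) = 0 -> G = 0.
Proof.
have col_ge0 j : 0 <= \sum_i G i j ^+ 2 by apply: sumr_ge0 => i _; apply: sqr_ge0.
rewrite mxtrace_gramE => /(psumr_eq0P (fun j _ => col_ge0 j)) G0.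
apply/matrixP => i j; rewrite mxE; apply/eqP; rewrite -sqrf_eq0; apply/eqP.
by apply: (psumr_eq0P _ (G0 j isT)) => // l _; apply: sqr_ge0.
Qed.

Lemma trmx_mul_self_gt0 n (c : 'cV[R]_n) : c != 0 -> 0 < (c^T *m c) 0 0.
Proof.
move=> c_neq0; rewrite -trace_mx11 lt0r mxtrace_gram_ge0 andbT.
by apply: contra c_neq0 => /eqP/mxtrace_gram_eq0 ->.
Qed.

Lemma qform_block n (al k : R) (c : 'rV[R]_n) (S : 'M[R]_n) w :
  qform (block_mx al%:M c c^T S) (col_mx k%:M w) =
  al * k ^+ 2 + 2 * k * (c *m w) 0 0 + qform S w.
Proof.
rewrite /qform /mxform tr_col_mx mul_row_block mul_row_col tr_scalar_mx.
rewrite !mulmxDl -scalar_mxM !mul_mx_scalar !mul_scalar_mx -trmx_mul -scalemxAl.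
by rewrite !mxE eqxx !mulr1n addrA; ring.
Qed.

Lemma posdefmx_schur n (al : R) (c : 'rV[R]_n) (S : 'M[R]_n) :
  posdefmx (block_mx al%:M c c^T S) -> 0 < al /\ posdefmx (S - al^-1 *: (c^T *m c)).
Proof.
case; rewrite tr_block_mx => /eq_block_mx [_ _ _ sS] pos.
have al_gt0 : 0 < al.
  have /pos : col_mx (1%:M : 'M[R]_1) (0 : 'cV[R]_n) != 0.
    by rewrite col_mx_eq0 negb_and matrix_nonzero1.
  by rewrite qform_block mulmx0 qform0r mxE expr1n !mulr1 mulr0 !addr0.
split=> //; split=> [|w w_neq0].
  by rewrite linearB linearZ /= trmx_mul trmxK sS.
(* [k] minimises the quadratic of [qform_block] *)
set beta := (c *m w) 0 0; pose k := - (al^-1 * beta).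
have qform_cc : qform (c^T *m c) w = beta ^+ 2.
  by rewrite /qform /mxform mulmxA -trmx_mul -mulmxA mxE big_ord1 mxE expr2.
have /pos : col_mx k%:M w != 0 by rewrite col_mx_eq0 negb_and w_neq0 orbT.
rewrite qform_block qformDl qformNl qformZl qform_cc -/beta.
have -> : al * k ^+ 2 + 2 * k * beta = - (al^-1 * beta ^+ 2).
  by rewrite /k; field; rewrite gt_eqF.
by rewrite addrC.
Qed.

Lemma posdefmx_gram n (S : 'M[R]_n) : posdefmx S -> exists B : 'M[R]_n, S = B^T *m B.
Proof.
elim: n S => [|n IH] S hS; first by exists 0; apply/matrixP => [[]].
have [al [c [S' defS]]] : exists al (c : 'rV[R]_n) S', S = block_mx al%:M c c^T S'.
  exists (ulsubmx (S : 'M[R]_(1 + n)) 0 0), (ursubmx (S : 'M[R]_(1 + n))).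
  exists (drsubmx (S : 'M[R]_(1 + n))).
  by rewrite -mx11_scalar trmx_ursub hS.1 submxK.
rewrite {}defS in hS *; have [al_gt0 /IH [C defC]] := posdefmx_schur hS.
have sqrt_al_neq0 : Num.sqrt al != 0 by rewrite sqrtr_eq0 -ltNge.
suff [B defB] : exists B : 'M[R]_(1 + n), block_mx al%:M c c^T S' = B^T *m B.
  by exists B.
exists (block_mx (Num.sqrt al)%:M ((Num.sqrt al)^-1 *: c) 0 C).
rewrite tr_block_mx mulmx_block !trmx0 !mul0mx !mulmx0 !addr0 tr_scalar_mx.
rewrite -scalar_mxM -expr2 sqr_sqrtr ?ltW // mul_scalar_mx scalerA mulfV //.
rewrite linearZ /= -scalemxAl mul_mx_scalar scalerA mulVf // !scale1r.
rewrite -scalemxAl -scalemxAr scalerA -expr2 exprVn sqr_sqrtr ?ltW //.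
by rewrite -defC addrC subrK.
Qed.

End PosDefMx.

Section TraceForm.
Variable R : rcfType.

Lemma mxtrace_sandwich_ge0 n (S T D : 'M[R]_n) :
  posdefmx S -> posdefmx T -> D^T = D -> 0 <= \tr (D *m S *m D *m T).
Proof.
move=> /posdefmx_gram [B ->] /posdefmx_gram [C ->] sD.
have -> : \tr (D *m (B^T *m B) *m D *m (C^T *m C)) =
          \tr ((B *m D *m C^T)^T *m (B *m D *m C^T)).
  by rewrite !trmx_mul trmxK sD !mulmxA mxtrace_mulC !mulmxA.
exact: mxtrace_gram_ge0.
Qed.

Lemma mxtrace_sandwich_eq0 n (S D : 'M[R]_n) :
  posdefmx S -> D^T = D -> \tr (D *m S *m D *m S) = 0 -> D = 0.
Proof.
move=> hS sD; have := posdefmx_unit hS.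
have [B ->] := posdefmx_gram hS; rewrite unitmx_mul => /andP [_ uB].
have -> : \tr (D *m (B^T *m B) *m D *m (B^T *m B)) =
          \tr ((B *m D *m B^T)^T *m (B *m D *m B^T)).
  by rewrite !trmx_mul trmxK sD !mulmxA mxtrace_mulC !mulmxA.
move=> /mxtrace_gram_eq0 BDB0.
have uBt : B^T \in unitmx by rewrite unitmx_tr.
by rewrite -[D](mulKmx uB) -[B *m D](mulmxK uBt) BDB0 mul0mx mulmx0.
Qed.

(* With [K = X^-1], [trdot K] is the Hessian of [- ln det] at [X]. *)
Definition trdot n (K E F : 'M[R]_n) : R := \tr (E *m K *m F *m K).

Lemma trdot_is_linear n (K E : 'M[R]_n) : linear_for *%R (trdot K E).
Proof.
move=> k F1 F2.
by rewrite /trdot mulmxDr -scalemxAr !mulmxDl -!scalemxAl mxtraceD mxtraceZ.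
Qed.

HB.instance Definition _ n (K E : 'M[R]_n) :=
  GRing.isLinear.Build R 'M[R]_n R *%R (trdot K E) (trdot_is_linear K E).

Lemma trdotC n (K E F : 'M[R]_n) : trdot K E F = trdot K F E.
Proof. by rewrite /trdot -(mulmxA (E *m K)) mxtrace_mulC !mulmxA. Qed.

Lemma trdot_ge0 n (K E : 'M[R]_n) : posdefmx K -> E^T = E -> 0 <= trdot K E E.
Proof. by move=> hK sE; apply: mxtrace_sandwich_ge0. Qed.

Lemma trdot_eq0 n (K E : 'M[R]_n) : posdefmx K -> E^T = E -> trdot K E E = 0 -> E = 0.
Proof. exact: mxtrace_sandwich_eq0. Qed.

Lemma trdotZ n (K E F : 'M[R]_n) k l :
  trdot K (k *: E) (l *: F) = k * l * trdot K E F.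
Proof. by rewrite /trdot -!scalemxAl -scalemxAr -!scalemxAl !mxtraceZ mulrA. Qed.

Lemma trdot_sqrD n (K E G : 'M[R]_n) :
  trdot K (E + G) (E + G) = trdot K E E + 2 * trdot K E G + trdot K G G.
Proof.
by rewrite linearD /= ![trdot K (E + G) _]trdotC !linearD /= (trdotC K G E); ring.
Qed.

Lemma trdot_cauchy_schwarz n (K E F : 'M[R]_n) : posdefmx K -> E^T = E -> F^T = F ->
  trdot K E F ^+ 2 <= trdot K E E * trdot K F F.
Proof.
move=> hK sE sF; have [->|F_neq0] := eqVneq F 0.
  by rewrite !linear0 expr0n mulr0.
set a := trdot K F F; set b := trdot K E F.
have a_gt0 : 0 < a.
  rewrite lt0r trdot_ge0 // andbT.
  by apply: contra F_neq0 => /eqP/(trdot_eq0 hK sF) ->.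
have sG : (a *: E + (- b) *: F)^T = a *: E + (- b) *: F.
  by rewrite linearD !linearZ /= sE sF.
have := trdot_ge0 hK sG; rewrite trdot_sqrD !trdotZ -/a -/b; nra.
Qed.

Lemma trdot_le_of_orth n (K E G : 'M[R]_n) : posdefmx K -> G^T = G ->
  trdot K E G = 0 -> trdot K E E <= trdot K (E + G) (E + G).
Proof. by move=> hK sG orth; rewrite trdot_sqrD orth mulr0 addr0 lerDl trdot_ge0. Qed.

Lemma trdot_mono n (S T D : 'M[R]_n) :
  posdefmx S -> posdefmx T -> posdefmx (T - S) -> D^T = D ->
  trdot S D D <= trdot T D D.
Proof.
move=> hS hT hTS sD; rewrite -subr_ge0 /trdot.
have -> : \tr (D *m T *m D *m T) - \tr (D *m S *m D *m S) =
    \tr (D *m (T - S) *m D *m T) + \tr (D *m S *m D *m (T - S)).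
  by rewrite !(mulmxBl, mulmxBr) !linearB /=; ring.
by rewrite addr_ge0 // mxtrace_sandwich_ge0.
Qed.

End TraceForm.

Section NewtonStep.
Variable R : rcfType.

Lemma qform_sqr_le_trdot n (X E : 'M[R]_n) v : posdefmx X -> E^T = E ->
  qform E v ^+ 2 <= trdot (invmx X) E E * qform X v ^+ 2.
Proof.
move=> hX sE; have [sX _] := hX; have uX := posdefmx_unit hX.
pose F := X *m v *m v^T *m X.
have sF : F^T = F by rewrite /F !trmx_mul trmxK sX !mulmxA.
have trdot_F G : trdot (invmx X) G F = qform G v.
  rewrite /trdot /F !mulmxA mulmxKV // mulmxK // mxtrace_mulC trace_mx11.
  by rewrite /qform /mxform mulmxA.
have qform_F : qform F v = qform X v ^+ 2.
  rewrite /qform /mxform /F !mulmxA -!(mulmxA (v^T *m X *m v)).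
  by rewrite mxE big_ord1 expr2.
have := trdot_cauchy_schwarz (posdefmx_inv hX) sE sF.
by rewrite trdot_F (trdot_F F) qform_F.
Qed.

Lemma abs_qform_lt n (X E : 'M[R]_n) e v : posdefmx X -> E^T = E -> 0 <= e ->
  trdot (invmx X) E E < e ^+ 2 -> v != 0 -> `|qform E v| < e * qform X v.
Proof.
move=> hX sE e_ge0 hE v_neq0; have qX_gt0 := hX.2 v v_neq0.
have lt_sqr : `|qform E v| ^+ 2 < (e * qform X v) ^+ 2.
  rewrite real_normK ?num_real // exprMn.
  apply: le_lt_trans (qform_sqr_le_trdot v hX sE) _.
  by rewrite ltr_pM2r ?exprn_gt0.
have := normr_ge0 (qform E v); have := mulr_ge0 e_ge0 (ltW qX_gt0); nra.
Qed.

Lemma posdefmx_inv_lt n (X Y : 'M[R]_n) k : 0 < k -> posdefmx X -> posdefmx Y ->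
  (forall w, w != 0 -> qform X w < k * qform Y w) ->
  posdefmx (k *: invmx X - invmx Y).
Proof.
move=> k_gt0 hX hY XkY; have [sX _] := hX; have [sY _] := hY.
have uX := posdefmx_unit hX; have uY := posdefmx_unit hY.
split=> [|v v_neq0]; first by rewrite linearB linearZ /= !trmx_inv sX sY.
have [w defv] : exists w, v = Y *m w by exists (invmx Y *m v); rewrite mulKVmx.
have w_neq0 : w != 0 by apply: contra v_neq0 => /eqP w0; rewrite defv w0 mulmx0.
rewrite {}defv.
set u := invmx X *m (Y *m w).
have cross : mxform X u w = qform Y w.
  by rewrite /mxform /qform /u !trmx_mul trmx_inv sX sY mulmxKV.
have := qform_ge0 (w + (- k) *: u) hX.
rewrite qformDr // qformZr linearZ /= (mxformC w u sX) cross.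
rewrite qformDl qformNl qformZl !qform_invmx // mulKmx // -/u.
have := XkY w w_neq0; nra.
Qed.

(* The fourth hypothesis is the Newton equation [H(x) z = -g(y)] tested
   against [z - x], written in terms of [X = Lambda x], [Y], [Z]. *)
Lemma posdefmx_newton_step n (X Y Z : 'M[R]_n) :
  posdefmx X -> posdefmx Y -> Z^T = Z ->
  trdot (invmx X) (Z - X) Z = \tr ((Z - X) *m invmx Y) ->
  trdot (invmx X) (X - Y) (X - Y) < 1 / 4 -> posdefmx Z.
Proof.
move=> hX hY sZ newton small; have [sX _] := hX; have [sY _] := hY.
have uX := posdefmx_unit hX; have uY := posdefmx_unit hY.
have hK := posdefmx_inv hX; have hJ := posdefmx_inv hY; have [sJ _] := hJ.
set K := invmx X in newton small hK *; set J := invmx Y in newton hJ sJ *.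
set D := X - Y in small *; set E := Z - X in newton *; set M := X *m J *m X.
have sD : D^T = D by rewrite linearB /= sX sY.
have sE : E^T = E by rewrite linearB /= sZ sX.
have sMZ : (M - Z)^T = M - Z by rewrite linearB /= !trmx_mul sX sJ mulmxA sZ.
have orth : trdot K E (M - Z) = 0.
  rewrite linearB /= newton /trdot /M !mulmxA mulmxKV // mulmxK //.
  by rewrite mxtrace_mulC subrr.
have E_le : trdot K E E <= trdot J D D.
  have -> : trdot J D D = trdot K (E + (M - Z)) (E + (M - Z)).
    rewrite /E addrC addrA subrK /M -[X in _ - X](mulmxKV uY X) -mulmxBr -/D.
    rewrite /trdot !mulmxA mulmxKV // [RHS]mxtrace_mulC !mulmxA mulVmx // mul1mx.
    by rewrite [RHS]mxtrace_mulC !mulmxA.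
  exact: trdot_le_of_orth.
have small' : trdot K D D < (1 / 2) ^+ 2 by rewrite expr2; lra.
have X_lt_2Y w : w != 0 -> qform X w < 2 * qform Y w.
  have half_ge0 : (0 : R) <= 1 / 2 by lra.
  move=> /(abs_qform_lt hX sD half_ge0 small')/ltr_normlW.
  have -> : Y = X - D by rewrite /D opprB addrC subrK.
  rewrite qformDl qformNl; lra.
have h2KJ := posdefmx_inv_lt (ltr0Sn _ 1) hX hY X_lt_2Y.
have D_le : trdot J D D <= 4 * trdot K D D.
  have -> : 4 * trdot K D D = trdot (2 *: K) D D.
    by rewrite /trdot -!scalemxAr -!scalemxAl !mxtraceZ mulrA -natrM.
  exact: trdot_mono hJ (posdefmxZ (ltr0Sn _ 1) hK) h2KJ sD.
have E_small : trdot K E E < 1 ^+ 2 by rewrite expr1n; lra.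
split=> // v v_neq0; rewrite -(subrK X Z) -/E qformDl.
have := ltrNnormlW (abs_qform_lt hX sE ler01 E_small v_neq0); lra.
Qed.

End NewtonStep.

Section BlockDiagonal.
Variables (R : rcfType) (m : nat) (L : 'I_m -> nat).

Lemma mxdiag_scale k (F : forall i, 'M[R]_(L i)) :
  \mxdiag_i (k *: F i) = k *: \mxdiag_i F i.
Proof.
have -> : k *: \mxdiag_i F i =
          \mxblock_(i, j) (k *: if i == j then conform_mx 0 (F i) else 0).
  by apply/matrixP => s t; rewrite /mxdiag !mxE.
by apply/eq_mxblock => i j; case: eqVneq => [->|]; rewrite ?conform_mx_id ?scaler0.
Qed.

Lemma qform_mxdiag (F : forall i, 'M[R]_(L i)) V :
  qform (\mxdiag_i F i) V = \sum_i qform (F i) (submxcol V i).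
Proof.
rewrite /qform /mxform -[V]submxcolK tr_mxcol mul_mxrow_mxdiag mul_mxrow_mxcol.
by rewrite summxE; apply: eq_bigr => i _; rewrite mxcolK.
Qed.

Definition mxcol_unit i0 (a : 'cV[R]_(L i0)) : 'cV[R]_(\sum_i L i) :=
  \mxcol_i (if i == i0 then conform_mx 0 a else 0).

Lemma qform_mxdiag_unit (F : forall i, 'M[R]_(L i)) i0 a :
  qform (\mxdiag_i F i) (mxcol_unit a) = qform (F i0) a.
Proof.
rewrite qform_mxdiag (bigD1 i0) //= big1 ?addr0 => [|j /negbTE j_neq].
  by rewrite mxcolK eqxx conform_mx_id.
by rewrite mxcolK j_neq qform0r.
Qed.

Lemma posdefmx_mxdiag (F : forall i, 'M[R]_(L i)) :
  (forall i, posdefmx (F i)) -> posdefmx (\mxdiag_i F i).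
Proof.
move=> hF; split=> [|V V_neq0].
  by rewrite tr_mxdiag; apply: eq_mxdiag => i; case: (hF i).
rewrite qform_mxdiag.
have [i Vi_neq0] : exists i, submxcol V i != 0.
  apply/existsP; apply: contraR V_neq0 => /existsPn Vi0.
  rewrite -[V]submxcolK -(mxcol0 (p_ := L) 1).
  by apply/eqP/eq_mxcol => i; apply/eqP/negPn.
rewrite (bigD1 i) //= ltr_pwDl ?(hF i).2 //.
by apply: sumr_ge0 => j _; apply: qform_ge0.
Qed.

End BlockDiagonal.

Section Barrier.
Variables (R : realType) (m U : nat) (L : 'I_m -> nat).
Variable A : forall i : 'I_m, 'I_U -> 'M[R]_(L i).

Local Notation Lam := (Lambda A).
Local Notation e_ u := (delta_mx u 0 : 'cV[R]_U).

Lemma Lambda_is_linear : linear (Lambda A).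
Proof.
move=> k v w; rewrite /Lambda -mxdiag_scale -mxdiagD; apply: eq_mxdiag => i.
rewrite /Lambda_i scaler_sumr -big_split.
by apply: eq_bigr => u _; rewrite !mxE scalerDl scalerA.
Qed.

HB.instance Definition _ :=
  GRing.isLinear.Build R 'cV[R]_U 'M[R]_(\sum_i L i) _ (Lambda A) Lambda_is_linear.

Hypothesis A_sym : forall i u, (A i u)^T = A i u.

Lemma Lambda_i_sym i v : (Lambda_i A i v)^T = Lambda_i A i v.
Proof.
by rewrite /Lambda_i linear_sum; apply: eq_bigr => u _; rewrite linearZ /= A_sym.
Qed.

Lemma Lambda_sym v : (Lam v)^T = Lam v.
Proof.
by rewrite /Lambda tr_mxdiag; apply: eq_mxdiag => i; apply: Lambda_i_sym.
Qed.

Lemma Lambda_sum_delta v : Lam v = \sum_u v u 0 *: Lam (e_ u).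
Proof.
rewrite {1}[v]matrix_sum_delta linear_sum; apply: eq_bigr => u _.
by rewrite big_ord1 linearZ.
Qed.

Lemma HessE x u v :
  Hess A x u v = trdot (invmx (Lam x)) (Lam (e_ u)) (Lam (e_ v)).
Proof. by rewrite !mxE Lambda_sym /trdot !mulmxA. Qed.

Lemma mxform_Hess x a b :
  mxform (Hess A x) a b = trdot (invmx (Lam x)) (Lam a) (Lam b).
Proof.
rewrite mxformE (Lambda_sum_delta a) (Lambda_sum_delta b) linear_sum exchange_big.
apply: eq_bigr => v _; rewrite linearZ /= trdotC linear_sum mulr_sumr.
by apply: eq_bigr => u _; rewrite linearZ /= HessE trdotC mulrC.
Qed.

Lemma posdefmx_Hess x : posdefmx (Lam x) -> (forall w, Lam w = 0 -> w = 0) ->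
  posdefmx (Hess A x).
Proof.
move=> hX Lam_inj; have hK := posdefmx_inv hX.
split=> [|w w_neq0]; first by apply/matrixP => u v; rewrite mxE !HessE trdotC.
rewrite /qform mxform_Hess lt0r trdot_ge0 ?Lambda_sym // andbT.
by apply: contra w_neq0 => /eqP/(trdot_eq0 hK (Lambda_sym w))/Lam_inj ->.
Qed.

Lemma dot_neg_grad y a :
  (a^T *m - grad A y) 0 0 = \tr (Lam a *m invmx (Lam y)).
Proof.
rewrite /grad opprK (Lambda_sum_delta a) mulmx_suml linear_sum mxE.
by apply: eq_bigr => u _; rewrite !mxE -scalemxAl linearZ /= Lambda_sym.
Qed.

Theorem posdefmx_Lambda_newton x y :
  posdefmx (Lam x) -> posdefmx (Lam y) -> (forall w, Lam w = 0 -> w = 0) ->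
  qform (Hess A x) (x - y) < 1 / 4 ->
  posdefmx (Lam (invmx (Hess A x) *m - grad A y)).
Proof.
move=> hX hY Lam_inj small.
have uH := posdefmx_unit (posdefmx_Hess hX Lam_inj).
apply: posdefmx_newton_step hX hY (Lambda_sym _) _ _; rewrite -linearB -mxform_Hess //.
by rewrite /mxform -mulmxA mulKVmx // dot_neg_grad.
Qed.

End Barrier.

Section DualCone.
Variables (R : realType) (U : nat).
Implicit Types (S : set 'cV[R]_U) (c w x z : 'cV[R]_U).

Lemma interior_shift S z w : interior S z -> exists2 t : R, 0 < t & S (z + t *: w).
Proof.
move=> /nbhs_ballP [e /= e_gt0 zeS]; have w_ge0 := normr_ge0 w.
pose t := e / (`|w| + 1); have t_gt0 : 0 < t by rewrite divr_gt0 // ltr_pwDr.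
have te : t * (`|w| + 1) = e by rewrite /t mulfVK // gt_eqF // ltr_pwDr.
exists t => //; apply: zeS.
rewrite -ball_normE /= opprD addrA subrr add0r normrN normrZ gtr0_norm //.
lra.
Qed.

Lemma dual_cone_interior_gt0 S x c :
  interior (dual_cone S) x -> S c -> c != 0 -> 0 < (c^T *m x) 0 0.
Proof.
move=> /(interior_shift (- c)) [t t_gt0 xtc] Sc /trmx_mul_self_gt0.
have := xtc c Sc; rewrite mulmxDr -scalemxAr mulmxN !mxE; nra.
Qed.

Lemma orthogonal_solid_eq0 S w : (interior S !=set0)%classic ->
  (forall c, S c -> (c^T *m w) 0 0 = 0) -> w = 0.
Proof.
move=> [c0 c0S] orth; have [t t_gt0 /orth] := interior_shift w c0S.
have := orth c0 (interior_subset c0S).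
rewrite linearD linearZ /= mulmxDl -scalemxAl !mxE => -> /eqP.
rewrite add0r mulf_eq0 gt_eqF //= => /eqP ww0.
by apply/eqP; apply: contraT => /trmx_mul_self_gt0; rewrite mxE ww0 ltxx.
Qed.

End DualCone.

Section Combo.
Variables (R : realType) (n U : nat) (q : 'I_U -> mpol R n).

Lemma combo_is_linear : linear (combo q).
Proof.
move=> k c1 c2; rewrite /combo scaler_sumr -big_split.
by apply: eq_bigr => u _; rewrite !mxE scalerDl scalerA.
Qed.

HB.instance Definition _ :=
  GRing.isLinear.Build R 'cV[R]_U (mpol R n) _ (combo q) combo_is_linear.

Lemma deg_le_combo k c : (forall u, deg_le (q u) k) -> deg_le (combo q c) k.
Proof.
move=> q_deg; rewrite /deg_le /combo; apply: leq_trans (mpoly.msize_sum _ _ _) _.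
apply/bigmax_leqP => u _; exact: leq_trans (mpoly.msizeZ_le _ _) (q_deg u).
Qed.

End Combo.

Section WeightedSOS.
Variables (R : realType) (n m : nat) (g : 'I_m -> mpol R n) (d : 'I_m -> nat).
Variables (U : nat) (q : 'I_U -> mpol R n) (L : 'I_m -> nat).
Variable p : forall i : 'I_m, 'I_(L i) -> mpol R n.
Arguments p : clear implicits.
Variable A : forall i : 'I_m, 'I_U -> 'M[R]_(L i).
Hypothesis q_basis : is_basis_V g d q.
Hypothesis p_basis : forall i, is_basis_deg (d i) (p i).
Hypothesis A_coord : forall i j k, g i * p i j * p i k = \sum_(u < U) A i u j k *: q u.

Local Notation Sigma := (Sigma_coord g d q).

Lemma combo_inj : injective (combo q).
Proof.
case: q_basis => _ q_free _ c1 c2 eq_c; apply/eqP; rewrite -subr_eq0.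
by apply/eqP/q_free; rewrite linearB /= eq_c subrr.
Qed.

Lemma combo_A_coord i j k : combo q (\col_u A i u j k) = g i * p i j * p i k.
Proof. by rewrite A_coord /combo; apply: eq_bigr => u _; rewrite mxE. Qed.

Lemma A_coord_sym i u : (A i u)^T = A i u.
Proof.
apply/matrixP => j k; rewrite mxE.
have /matrixP/(_ u 0) : \col_u A i u k j = \col_u A i u j k.
  by apply: combo_inj; rewrite !combo_A_coord mulrAC.
by rewrite !mxE.
Qed.

Definition sq_coord i (a : 'cV[R]_(L i)) : 'cV[R]_U := \col_u qform (A i u) a.

Lemma combo_sq_coord i (a : 'cV[R]_(L i)) :
  combo q (sq_coord a) = g i * combo (p i) a ^+ 2.
Proof.
have -> : sq_coord a = \sum_j \sum_k (a j 0 * a k 0) *: \col_u A i u j k.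
  apply/matrixP => u z; rewrite (ord1 z) !mxE /qform mxformE summxE.
  apply: eq_bigr => j _; rewrite summxE; apply: eq_bigr => k _.
  by rewrite !mxE mulrAC.
rewrite !linear_sum /= expr2 mulrA [in RHS]/combo mulr_sumr.
apply: eq_bigr => j _; rewrite mulr_sumr mulr_suml linear_sum.
apply: eq_bigr => k _; rewrite linearZ /= combo_A_coord -!scalerAr -scalerAl scalerA.
by rewrite mulrAC.
Qed.

Lemma sq_coord_dot i (a : 'cV[R]_(L i)) w :
  ((sq_coord a)^T *m w) 0 0 = qform (Lambda_i A i w) a.
Proof.
rewrite mxE /Lambda_i.
rewrite (big_morph (fun S => qform S a) (fun S T => qformDl S T a) (qform0l a)).
by apply: eq_bigr => u _; rewrite !mxE qformZl mulrC.
Qed.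

Lemma Sigma_sq_coord i (a : 'cV[R]_(L i)) : Sigma (sq_coord a).
Proof.
exists (fun j => if j == i then combo (p i) a ^+ 2 else 0); split=> [j|].
  case: eqP => [->|_]; last by exists 0%N, (fun _ => 0); split; [case | rewrite big_ord0].
  exists 1%N, (fun _ => combo (p i) a); split; last by rewrite big_ord1.
  by move=> _; apply: deg_le_combo; case: (p_basis i).
rewrite combo_sq_coord (bigD1 i) //= eqxx big1 ?addr0 // => j /negbTE ->.
exact: mulr0.
Qed.

Lemma sq_coord_neq0 i (a : 'cV[R]_(L i)) : g i != 0 -> a != 0 -> sq_coord a != 0.
Proof.
move=> gi_neq0; apply: contraNneq => sq0; apply/eqP.
have /eqP : g i * combo (p i) a ^+ 2 = 0 by rewrite -combo_sq_coord sq0 linear0.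
rewrite mulf_eq0 (negbTE gi_neq0) expf_eq0 /= => /eqP.
by case: (p_basis i) => _ p_free _ /p_free.
Qed.

Lemma sos_block_dual i s : is_sos (d i) s ->
  exists c, combo q c = g i * s /\
    forall w, (forall a, 0 <= qform (Lambda_i A i w) a) -> 0 <= (c^T *m w) 0 0.
Proof.
case=> N [h [h_deg ->]].
have /boolp.choice [a h_coord] : forall j, exists a, h j = combo (p i) a.
  by move=> j; case: (p_basis i) => _ _; apply.
exists (\sum_j sq_coord (a j)); split=> [|w w_psd].
  rewrite linear_sum mulr_sumr; apply: eq_bigr => j _.
  by rewrite /= combo_sq_coord h_coord.
rewrite linear_sum mulmx_suml summxE.
by apply: sumr_ge0 => j _; rewrite sq_coord_dot.
Qed.

Lemma dual_Sigma_of_psd w :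
  (forall i a, 0 <= qform (Lambda_i A i w) a) -> dual_cone Sigma w.
Proof.
move=> w_psd c [sigma [sigma_sos sum_sigma]].
have /boolp.choice [cs cs_spec] := fun i => sos_block_dual (sigma_sos i).
have -> : c = \sum_i cs i.
  apply: combo_inj; rewrite -sum_sigma linear_sum.
  by apply: eq_bigr => i _; rewrite /= (cs_spec i).1.
rewrite linear_sum mulmx_suml summxE; apply: sumr_ge0 => i _.
exact: (cs_spec i).2.
Qed.

Lemma posdefmx_Lambda_interior x : (forall i, g i != 0) ->
  interior (dual_cone Sigma) x -> posdefmx (Lambda A x).
Proof.
move=> g_neq0 x_int; apply: posdefmx_mxdiag => i.
split=> [|a a_neq0].
  by apply: Lambda_i_sym => j u; apply: A_coord_sym.
rewrite -sq_coord_dot; apply: dual_cone_interior_gt0 x_int (Sigma_sq_coord a) _.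
exact: sq_coord_neq0.
Qed.

Lemma Lambda_inj : proper_cone Sigma -> forall w, Lambda A w = 0 -> w = 0.
Proof.
case=> _ _ Sigma_solid w Lw0.
have dual_of_null v : Lambda A v = 0 -> dual_cone Sigma v.
  move=> Lv0; apply: dual_Sigma_of_psd => i a.
  by rewrite -(qform_mxdiag_unit (fun j => Lambda_i A j v)) -/(Lambda A v) Lv0 qform0l.
have w_dual := dual_of_null w Lw0.
have Nw_dual : dual_cone Sigma (- w) by apply: dual_of_null; rewrite linearN /= Lw0 oppr0.
apply: orthogonal_solid_eq0 Sigma_solid _ => c Sc.
apply/eqP; rewrite eq_le (w_dual c Sc) andbT -oppr_ge0.
by have := Nw_dual c Sc; rewrite mulmxN mxE.
Qed.

End WeightedSOS.

Theorem corollary1 (R : realType) (n m : nat)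
    (g : 'I_m -> mpol R n) (d : 'I_m -> nat)
    (U : nat) (q : 'I_U -> mpol R n)
    (L : 'I_m -> nat) (p : forall i : 'I_m, 'I_(L i) -> mpol R n)
    (A : forall i : 'I_m, 'I_U -> 'M[R]_(L i)) :
  (forall i, g i != 0) ->
  is_basis_V g d q ->
  proper_cone (Sigma_coord g d q) ->
  (forall i, is_basis_deg (d i) (p i)) ->
  (* Lambda_i is the linear map with sum_u q_u Lambda_i(e_u) = g_i p_i p_i^T *)
  (forall i j k, g i * p i j * p i k = \sum_(u < U) A i u j k *: q u) ->
  forall x y : 'cV[R]_U,
    interior (dual_cone (Sigma_coord g d q)) x ->
    interior (dual_cone (Sigma_coord g d q)) y ->
    let t := - grad A y in
    local_norm A x (x - y) < 1 / 2 ->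
    dual_cone (Sigma_coord g d q) (invmx (Hess A x) *m t).
Proof.
move=> g_neq0 q_basis proper p_basis A_coord x y x_int y_int t near_xy.
have A_sym := A_coord_sym q_basis A_coord.
have Lam_inj := Lambda_inj q_basis p_basis A_coord proper.
have hX := posdefmx_Lambda_interior q_basis p_basis A_coord g_neq0 x_int.
have hY := posdefmx_Lambda_interior q_basis p_basis A_coord g_neq0 y_int.
have small : qform (Hess A x) (x - y) < 1 / 4.
  have qH_ge0 := qform_ge0 (x - y) (posdefmx_Hess A_sym hX Lam_inj).
  rewrite -(sqr_sqrtr qH_ge0); have := sqrtr_ge0 (qform (Hess A x) (x - y)).
  by move: near_xy; rewrite /local_norm -/(mxform _ _ _) -/(qform _ _); nra.
have hZ := posdefmx_Lambda_newton A_sym hX hY Lam_inj small.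
apply: (dual_Sigma_of_psd q_basis p_basis A_coord) => i a.
by rewrite -(qform_mxdiag_unit (fun j => Lambda_i A j _)) qform_ge0.
Qed.
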